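(* For $3\le n\le m$ and $2\le 2r<n$, there exists a set $S\subset\mathrm{GF}(q^m)^n$ with rank diameter $2r$ such that $|S|>V_r(q^m,n)$.
   Context: The rank $\mathrm{rk}(\mathbf x)$ of $\mathbf x\in\mathrm{GF}(q^m)^n$ is the maximum number of its coordinates linearly independent over $\mathrm{GF}(q)$, and $d_{\mathrm R}(\mathbf x,\mathbf y)=\mathrm{rk}(\mathbf x-\mathbf y)$. The diameter of a set is the maximum rank distance between two of its elements. $V_r(q^m,n)$ is the number of vectors of $\mathrm{GF}(q^m)^n$ within rank distance $r$ of a fixed vector, i.e. $V_r(q^m,n)=\sum_{u=0}^r {n\brack u}\alpha(m,u)$ with $\alpha(m,0)=1$, $\alpha(m,u)=\prod_{i=0}^{u-1}(q^m-q^i)$ and ${n\brack u}=\alpha(n,u)/\alpha(u,u)$ the Gaussian binomial. *)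

From HB Require Import structures.
From mathcomp Require Import all_boot all_order all_algebra all_field.
Set Implicit Arguments. Unset Strict Implicit. Unset Printing Implicit Defensive.
Import GRing.Theory.

(* GF(q) is modelled by a finite field F (q = #|F|), and GF(q^m) by a field
   extension L of F of degree m (\dim {:L} = m).  Vectors of GF(q^m)^n are
   row vectors 'rV[L]_n. *)

Local Open Scope ring_scope.

Definition rk (F : fieldType) (L : fieldExtType F) (n : nat) (x : 'rV[L]_n) : nat :=
  \dim <<[seq x ord0 i | i <- enum 'I_n]>>%VS.

Definition rdist (F : fieldType) (L : fieldExtType F) (n : nat)
  (x y : 'rV[L]_n) : nat := rk (x - y).

Definition rank_diameter_eq (F : fieldType) (L : fieldExtType F) (n : nat)
  (S : seq 'rV[L]_n) (d : nat) : Prop :=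
  (forall x y, x \in S -> y \in S -> rdist x y <= d)%N /\
  (exists x y, [/\ x \in S, y \in S & rdist x y = d]).

Local Close Scope ring_scope.

Definition alpha (q m u : nat) : nat := \prod_(i < u) (q ^ m - q ^ i).

Definition gbin (q n u : nat) : nat := alpha q n u %/ alpha q u u.

Definition Vr (q m n r : nat) : nat :=
  \sum_(u < r.+1) gbin q n u * alpha q m u.

From HB Require Import structures.
From mathcomp Require Import all_boot all_order all_algebra all_field zify.
Import GRing.Theory VectorInternalTheory.

(* The vectors whose last n - 2r coordinates vanish form a set of q^(2rm)
   vectors of rank diameter 2r, the first 2r coordinates being allowed to be
   F-independent.  As m >= n, q^(2rm) >= q^((n+m)r), and V_r is smaller:
   its u-th term is at most alpha(n,u) alpha(m,u) <= (q^n-1)(q^m-1) q^((n+m)(u-1)),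
   and since (q^n-1)(q^m-1) < q^(n+m) - 1 these terms add up to less than
   q^((n+m)r). *)

Set Implicit Arguments.
Unset Strict Implicit.
Unset Printing Implicit Defensive.

Lemma alphaS_le q k u : alpha q k u.+1 <= (q ^ k - 1) * q ^ (k * u).
Proof.
rewrite /alpha big_ord_recl expn0 leq_mul2l expnM; apply/orP; right.
apply: leq_trans (leq_prod (fun i _ => leq_subr _ _)) _.
by rewrite prod_nat_const card_ord.
Qed.

Lemma gbin_le_alpha q n u : gbin q n u <= alpha q n u.
Proof. exact: leq_div. Qed.

Section AlphaProductSum.
Variables q n m : nat.
Hypotheses (q_gt1 : 1 < q) (n_gt0 : 0 < n) (m_gt0 : 0 < m).

Lemma sum_alpha2_step r :
  \sum_(u < r.+1) alpha q n u * alpha q m u <= q ^ ((n + m) * r) ->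
  \sum_(u < r.+2) alpha q n u * alpha q m u < q ^ ((n + m) * r.+1).
Proof.
move=> le_sum; rewrite big_ord_recr /=.
have le_term := leq_mul (alphaS_le q n r) (alphaS_le q m r).
rewrite mulnACA -expnD -mulnDl in le_term.
rewrite mulnS expnD; set P := q ^ ((n + m) * r) in le_sum le_term *.
have P_gt0 : 0 < P by rewrite expn_gt0 ltnW.
have qn_gt1 : 1 < q ^ n by rewrite -(exp1n n) ltn_exp2r // -lt0n.
have qm_gt1 : 1 < q ^ m by rewrite -(exp1n m) ltn_exp2r // -lt0n.
rewrite expnD; apply: leq_ltn_trans (leq_add le_sum le_term) _.
nia.
Qed.

Lemma sum_alpha2_le r :
  \sum_(u < r.+1) alpha q n u * alpha q m u <= q ^ ((n + m) * r).
Proof.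
elim: r => [|r IHr]; first by rewrite big_ord1 /alpha !big_ord0 muln0.
exact/ltnW/sum_alpha2_step.
Qed.

Lemma Vr_lt_expn r : 0 < r -> Vr q m n r < q ^ ((n + m) * r).
Proof.
case: r => // r _; apply: leq_ltn_trans (sum_alpha2_step (sum_alpha2_le r)).
by apply: leq_sum => u _; rewrite leq_mul2r gbin_le_alpha orbT.
Qed.

End AlphaProductSum.

Section PadRow.
Variables (R : zmodType) (n k : nat).
Local Open Scope ring_scope.

Definition pad_row (v : 'I_k -> R) : 'rV[R]_n :=
  \row_(j < n) oapp v 0 (insub (val j)).

Lemma pad_row_ord (v : 'I_k -> R) (i : 'I_k) (j : 'I_n) :
  val j = val i -> pad_row v ord0 j = v i.
Proof. by move=> eq_ji; rewrite mxE eq_ji valK. Qed.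

Lemma pad_rowB (v w : 'I_k -> R) :
  pad_row v - pad_row w = pad_row (fun i => v i - w i).
Proof.
by apply/rowP => j; rewrite !mxE; case: insubP => [i _ _|_] /=; rewrite ?subr0.
Qed.

Lemma pad_row_inj (v w : 'I_k -> R) : (k <= n)%N -> pad_row v = pad_row w -> v =1 w.
Proof.
move=> le_kn eq_vw i; rewrite -(@pad_row_ord v i (widen_ord le_kn i)) //.
by rewrite eq_vw (@pad_row_ord w i).
Qed.

End PadRow.

Lemma rk_pad_row (F : fieldType) (L : fieldExtType F) n k (v : 'I_k -> L) :
  k <= n -> rk (pad_row n v) = \dim <<[seq v i | i <- enum 'I_k]>>.
Proof.
move=> le_kn; congr (\dim _); apply/eqP; rewrite eqEsubv.
apply/andP; split; apply/span_subvP => _ /mapP[j _ ->].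
  rewrite mxE; case: insubP => [i _ _|_] /=; last exact: mem0v.
  exact/memv_span/map_f/mem_enum.
rewrite -(@pad_row_ord _ n _ v j (widen_ord le_kn j)) //.
exact/memv_span/map_f/mem_enum.
Qed.

Lemma dim_span_take_basis (K : fieldType) (vT : vectType K) (U : {vspace vT}) X k :
  basis_of U X -> k <= size X -> \dim <<take k X>> = k.
Proof.
move=> /basis_free freeX le_kX.
have /eqP -> : free (take k X).
  by apply: (@catl_free _ _ (drop k X)); rewrite cat_take_drop.
exact: size_takel.
Qed.

Section PaddedRows.
Variables (F : finFieldType) (L : fieldExtType F) (n k : nat).
Hypothesis le_kn : k <= n.

Definition pad_mx (M : 'M[F]_(k, dim L)) : 'rV[L]_n :=
  pad_row n (fun i => r2v (row i M)).

Definition padded_rows : seq 'rV[L]_n :=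
  [seq pad_mx M | M <- enum {: 'M[F]_(k, dim L)}].

Lemma padded_rows_uniq : uniq padded_rows.
Proof.
rewrite map_inj_uniq ?enum_uniq // => M M' /(pad_row_inj le_kn) eq_rows.
by apply/row_matrixP => i; apply/r2v_inj/eq_rows.
Qed.

Lemma size_padded_rows : size padded_rows = #|F| ^ (k * \dim {:L}).
Proof. by rewrite size_map -cardE card_mx dimvf. Qed.

Lemma rank_diameter_padded_rows : k <= \dim {:L} -> rank_diameter_eq padded_rows k.
Proof.
move=> le_k_dimL; split.
  move=> _ _ /mapP[M _ ->] /mapP[M' _ ->].
  rewrite /rdist /pad_mx pad_rowB rk_pad_row //.
  by apply: leq_trans (dim_span _) _; rewrite size_map size_enum_ord.
pose B := vbasis {:L}; pose M := (\matrix_(i < k) v2r B`_i)%R.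
exists (pad_mx M), (pad_mx 0%R); split; try exact/map_f/mem_enum.
rewrite /rdist /pad_mx pad_rowB rk_pad_row //.
have -> : [seq (r2v (row i M) - r2v (row i 0)) | i <- enum 'I_k]%R = take k B.
  rewrite -(map_nth_iota0 0%R) ?size_tuple // -val_enum_ord -map_comp.
  by apply: eq_map => i /=; rewrite rowK row0 linear0 subr0 v2rK.
by rewrite (dim_span_take_basis (vbasisP _)) ?size_tuple.
Qed.

End PaddedRows.

Theorem proposition1 (F : finFieldType) (L : fieldExtType F) (m n r : nat) :
  \dim {:L} = m -> 3 <= n -> n <= m -> 2 <= 2 * r -> 2 * r < n ->
  exists S : seq 'rV[L]_n,
    uniq S /\ rank_diameter_eq S (2 * r) /\ Vr #|F| m n r < size S.
Proof.
move=> dimL n_ge3 le_nm r_ge1 lt_2r_n.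
have le_2r_n := ltnW lt_2r_n; have le_2r_m := leq_trans le_2r_n le_nm.
have n_gt0 : 0 < n by lia.
have r_gt0 : 0 < r by lia.
have q_gt1 := card_finNzRing_gt1 F.
exists (padded_rows L n (2 * r)); split; first exact: padded_rows_uniq.
split; first by apply: rank_diameter_padded_rows; rewrite ?dimL.
rewrite size_padded_rows dimL.
apply: leq_trans (Vr_lt_expn q_gt1 n_gt0 (leq_trans n_gt0 le_nm) r_gt0) _.
rewrite leq_pexp2l ?(ltnW q_gt1) //.
by rewrite mulnAC leq_mul2r mul2n -addnn leq_add2r le_nm orbT.
Qed.
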